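(* Let $\pi\subseteq\mathbb{R}^{s+1}$ be an absolutely rational subspace with $\dim\pi\ge 2$ and let $\Lambda=\mathbb{Z}^{s+1}\cap\pi$. Let $\zeta\in\Lambda$ be a point with positive first coordinate such that the sequence of best approximations to the ray $\ell(\zeta)$ is $\mathcal{B}(\ell(\zeta))=\{\zeta^1,\zeta^2,\dots,\zeta^\tau,\dots,\zeta^t\}$ with $\zeta^t=\zeta$, and such that $\mathcal{B}_\tau^t(\ell(\zeta))=\{\zeta^\tau,\dots,\zeta^t\}\subset\Lambda$. Suppose that $D(\zeta^\tau)<D(\xi)$ for every integer point $\xi$ not belonging to $\pi$ (with $D$ computed with respect to the ray $\ell(\zeta)$). Then there exists $\epsilon>0$ such that every ray $\ell'\subset K_\epsilon(\ell(\zeta))$ satisfies: (1) $\mathcal{B}(\ell')\supset\mathcal{B}(\ell(\zeta))$; (2) all best approximations to $\ell'$ lying between the approximations $\zeta^\tau$ and $\zeta^t$ (in the ordering of $\mathcal{B}(\ell')$) belong to $\pi$.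
   Context: In $\mathbb{R}^{s+1}$ with coordinates $(x,y_1,\dots,y_s)$, a ray $\ell$ is a ray from the origin lying in the half-space $\{x>0\}$. For small $\epsilon>0$, the open cone $K_\epsilon(\ell)$ consists of all rays $\ell'$ making an angle less than $\epsilon$ with $\ell$. For $\xi$ with $x>0$, $\ell(\xi)=\{\kappa\xi:\kappa\ge0\}$. A subspace $\pi$ is absolutely rational if the lattice $\pi\cap\mathbb{Z}^{s+1}$ has dimension $\dim\pi$. For a ray $\ell$ parallel to $(1,\beta_1,\dots,\beta_s)$ and an integer point $\xi=(q,b_1,\dots,b_s)$, $D(\xi)=\max_j|q\beta_j-b_j|$. A best approximation to $\ell$ is a best simultaneous approximation to $\beta=(\beta_1,\dots,\beta_s)$, i.e. an integer point $(p,a_1,\dots,a_s)$ with $p\ge1$ such that $\max_j|p\beta_j-a_j|<\max_j|q\beta_j-b_j|$ for all $1\le q\le p$ and $(b_1,\dots,b_s)\in\mathbb{Z}^s\setminus\{(a_1,\dots,a_s)\}$. When no $\beta_j$ is a half of an integer, these form a well-defined sequence $\mathcal{B}(\ell)=\{\zeta^1,\zeta^2,\dots\}$ ordered by increasing first coordinate $p^1<p^2<\dots$ (finite if $\ell$ contains a nonzero integer point, infinite otherwise), and $\mathcal{B}_k^t(\ell)=\{\zeta^k,\zeta^{k+1},\dots,\zeta^t\}$. *)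

From HB Require Import structures.
From mathcomp Require Import all_boot all_order all_algebra.
From mathcomp Require Import reals trigo.
Set Implicit Arguments. Unset Strict Implicit. Unset Printing Implicit Defensive.
Import Order.TTheory GRing.Theory Num.Theory.
Local Open Scope ring_scope.

(* R^{s+1} = 'rV[R]_(s.+1); coordinate 0 is x, coordinate (lift ord0 j) is y_(j+1).
   Integer points are 'rV[int]_(s.+1). *)

Section Defs.
Variable R : realType.
Variable s : nat.

Definition ycoord (j : 'I_s) : 'I_s.+1 := lift ord0 j.

Definition toR (xi : 'rV[int]_s.+1) : 'rV[R]_s.+1 := map_mx (fun z : int => z%:~R) xi.

Definition dotv (u w : 'rV[R]_s.+1) : R := \sum_(i < s.+1) u ord0 i * w ord0 i.
Definition normv (u : 'rV[R]_s.+1) : R := Num.sqrt (dotv u u).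

Definition angle (u w : 'rV[R]_s.+1) : R := acos (dotv u w / (normv u * normv w)).

(* the ray spanned by v (with v_0 > 0) is parallel to (1, beta) with
   beta_j = v_(j) / v_0; D v xi = max_j |q beta_j - b_j| for xi = (q, b). *)
Definition beta (v : 'rV[R]_s.+1) (j : 'I_s) : R := v ord0 (ycoord j) / v ord0 ord0.

Definition Dist (v : 'rV[R]_s.+1) (xi : 'rV[int]_s.+1) : R :=
  \big[Num.max/0]_(j < s)
     `| (xi ord0 ord0)%:~R * beta v j - (xi ord0 (ycoord j))%:~R |.

Definition best_approx (v : 'rV[R]_s.+1) (xi : 'rV[int]_s.+1) : Prop :=
  (1 <= xi ord0 ord0)%R /\
  forall eta : 'rV[int]_s.+1,
    (1 <= eta ord0 ord0)%R -> (eta ord0 ord0 <= xi ord0 ord0)%R -> eta <> xi ->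
    Dist v xi < Dist v eta.

(* a subspace pi is absolutely rational if the lattice pi ∩ Z^{s+1} has rank dim pi,
   i.e. pi contains dim pi linearly independent integer points *)
Definition in_sub (pi : {vspace 'rV[R]_s.+1}) (xi : 'rV[int]_s.+1) : Prop :=
  toR xi \in pi.

Definition absolutely_rational (pi : {vspace 'rV[R]_s.+1}) : Prop :=
  exists L : seq 'rV[int]_s.+1,
    [/\ forall xi, xi \in L -> in_sub pi xi,
        free (map toR L) & size L = \dim pi].

End Defs.
Arguments toR R {s} xi.

From HB Require Import structures.
From mathcomp Require Import all_boot all_order all_algebra.
From mathcomp Require Import reals trigo.
From mathcomp Require Import ring lra.
Import Order.TTheory GRing.Theory Num.Theory.
Local Open Scope ring_scope.

(* The D-values of integer points with respect to l(zeta) lie in (1/q)Z, where q > 0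
   is the first coordinate of zeta, so two distinct values differ by at least 1/q.  A ray
   l' at a small angle from l(zeta) has slopes beta within 1/(4q^2) of those of l(zeta),
   which moves D(xi) by at most 1/(4q) whenever the first coordinate of xi lies in [0, q].
   Hence every strict comparison of D-values among such points survives the passage from
   l(zeta) to l'.  The best approximations to l(zeta) have first coordinate at most q
   (D(zeta) = 0), so they stay best approximations to l'; and a best approximation to l'
   with first coordinate in [q(zeta^tau), q] outside pi would beat zeta^tau for l', while
   it loses to zeta^tau for l(zeta). *)

Lemma norm_le_of_sqr_le (R : realDomainType) (x r : R) :
  0 <= r -> x ^+ 2 <= r ^+ 2 -> `|x| <= r.
Proof. by move=> r0 xr; rewrite -(ler_pXn2r (n := 2)) ?nnegrE // real_normK ?num_real. Qed.

Lemma ratio_dist_le (R : realFieldType) (x y c a r d : R) : 0 < a -> a <= 1 -> 0 < d ->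
  `|x - c| <= r -> `|y - a| <= r -> `|c| <= 1 -> r <= a / 2 -> r <= d * a ^+ 2 / 4 ->
  `|x / y - c / a| <= d.
Proof.
move=> a0 a1 d0 xc ya c1 ra rd; have r0 : 0 <= r := le_trans (normr_ge0 _) xc.
have y_ge : a / 2 <= y by move: ya; rewrite ler_norml => /andP[]; lra.
have ya0 : 0 < y * a by rewrite mulr_gt0 //; lra.
have -> : x / y - c / a = ((x - c) * a - c * (y - a)) / (y * a).
  by field; rewrite !gt_eqF //; lra.
rewrite normrM normfV (gtr0_norm ya0) ler_pdivrMr //.
apply: le_trans (ler_normB _ _) _; rewrite !normrM (gtr0_norm a0).
have : `|x - c| * a <= r by nra.
have : `|c| * `|y - a| <= r by rewrite -[r]mul1r ler_pM.
have : d * a ^+ 2 / 2 <= d * (y * a) by rewrite expr2; nra.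
lra.
Qed.

Section Rays.
Context {R : realType} {s : nat}.
Implicit Types (u v w : 'rV[R]_s.+1) (xi eta : 'rV[int]_s.+1) (a b c d r : R).

Lemma dotvZ a b u w : dotv (a *: u) (b *: w) = a * b * dotv u w.
Proof. by rewrite /dotv mulr_sumr; apply: eq_bigr => i _; rewrite !mxE; ring. Qed.

Lemma dotv_ge0 u : 0 <= dotv u u.
Proof. by apply: sumr_ge0 => i _; rewrite -expr2 sqr_ge0. Qed.

Lemma dotv_sqrB u w : dotv (u - w) (u - w) = dotv u u + dotv w w - dotv u w *+ 2.
Proof.
rewrite /dotv -sumrMnl -big_split -sumrB; apply: eq_bigr => i _ /=.
by rewrite !mxE; ring.
Qed.

Lemma dotv_sqrD u w : dotv (u + w) (u + w) = dotv u u + dotv w w + dotv u w *+ 2.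
Proof.
rewrite /dotv -sumrMnl -!big_split; apply: eq_bigr => i _ /=.
by rewrite !mxE; ring.
Qed.

Lemma sqr_coord_le_dotv u i : u ord0 i ^+ 2 <= dotv u u.
Proof.
rewrite /dotv (bigD1 i) //= expr2 lerDl.
by apply: sumr_ge0 => k _; rewrite -expr2 sqr_ge0.
Qed.

Lemma dotv_gt0 u : 0 < u ord0 ord0 -> 0 < dotv u u.
Proof. by move=> u0; apply: lt_le_trans (sqr_coord_le_dotv u ord0); rewrite exprn_gt0. Qed.

Definition unitv u := (normv u)^-1 *: u.

Lemma normv_gt0 u : 0 < u ord0 ord0 -> 0 < normv u.
Proof. by move=> u0; rewrite sqrtr_gt0 dotv_gt0. Qed.

Lemma dotv_unitv u : 0 < u ord0 ord0 -> dotv (unitv u) (unitv u) = 1.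
Proof.
move=> u0; rewrite dotvZ -invfM -expr2 sqr_sqrtr ?dotv_ge0 // mulVf //.
by rewrite gt_eqF ?dotv_gt0.
Qed.

Lemma unitv_gt0 u : 0 < u ord0 ord0 -> 0 < unitv u ord0 ord0.
Proof. by move=> u0; rewrite mxE mulr_gt0 ?invr_gt0 ?normv_gt0. Qed.

Lemma dotv_unitvE u w : dotv (unitv u) (unitv w) = dotv u w / (normv u * normv w).
Proof. by rewrite dotvZ invfM mulrC. Qed.

Lemma beta_unitv u j : 0 < u ord0 ord0 -> beta (unitv u) j = beta u j.
Proof.
move=> u0; rewrite /beta !mxE; field.
by rewrite !gt_eqF ?normv_gt0.
Qed.

Lemma dotv_unit_itv u w : dotv u u = 1 -> dotv w w = 1 -> dotv u w \in `[-1, 1].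
Proof.
move=> u1 w1; have := dotv_ge0 (u - w); have := dotv_ge0 (u + w).
rewrite dotv_sqrB dotv_sqrD u1 w1 in_itv /= !mulr2n => ? ?.
by apply/andP; split; lra.
Qed.

Lemma unit_coord_le1 u i : dotv u u = 1 -> `|u ord0 i| <= 1.
Proof. by move=> u1; rewrite norm_le_of_sqr_le // expr1n -u1 sqr_coord_le_dotv. Qed.

Lemma unit_coord_close u w r i : dotv u u = 1 -> dotv w w = 1 -> 0 <= r ->
  1 - r ^+ 2 / 2 <= dotv u w -> `|u ord0 i - w ord0 i| <= r.
Proof.
move=> u1 w1 r0 uw; apply: norm_le_of_sqr_le => //.
have := sqr_coord_le_dotv (u - w) i; rewrite dotv_sqrB u1 w1 !mxE mulr2n.
lra.
Qed.

Lemma dotv_unitv_gt_of_angle u w c : 0 < u ord0 ord0 -> 0 < w ord0 ord0 ->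
  -1 <= c <= 1 -> angle u w < acos c -> c < dotv (unitv u) (unitv w).
Proof.
move=> u0 w0 c_itv; rewrite /angle -dotv_unitvE.
set x := dotv _ _.
have x_itv : x \in `[-1, 1] by apply: dotv_unit_itv; apply: dotv_unitv.
have := x_itv; rewrite in_itv /= => x_bd.
by rewrite -ltr_cos ?in_itv /= ?acos_ge0 ?acos_lepi // !acosK ?in_itv.
Qed.

Lemma beta_close_of_angle {w d} : 0 < w ord0 ord0 -> 0 < d ->
  exists2 eps, 0 < eps & forall u, 0 < u ord0 ord0 -> angle u w < eps ->
    forall j, `|beta u j - beta w j| <= d.
Proof.
move=> w0 d0; set a := unitv w ord0 ord0.
have a0 : 0 < a by exact: unitv_gt0.
have w1 := dotv_unitv _ w0.
have a1 : a <= 1 := le_trans (ler_norm a) (unit_coord_le1 _ ord0 w1).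
set r := Num.min (a / 2) (d * a ^+ 2 / 4).
have r0 : 0 < r by rewrite lt_min !mulr_gt0 ?exprn_gt0 ?invr_gt0.
have ra : r <= a / 2 by rewrite ge_min lexx.
have rd : r <= d * a ^+ 2 / 4 by rewrite ge_min lexx orbT.
have c0_ge : -1 <= 1 - r ^+ 2 / 2 by nra.
have c0_lt : 1 - r ^+ 2 / 2 < 1 by nra.
exists (acos (1 - r ^+ 2 / 2)); first by rewrite acos_gt0 ?c0_ge.
move=> u u0 uw j.
have u1 := dotv_unitv _ u0.
have close_uw : 1 - r ^+ 2 / 2 <= dotv (unitv u) (unitv w).
  by apply/ltW/dotv_unitv_gt_of_angle; rewrite ?c0_ge ?ltW.
rewrite -(beta_unitv u) // -(beta_unitv w) // /beta.
have uw_coord i : `|unitv u ord0 i - unitv w ord0 i| <= r.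
  by apply: unit_coord_close; rewrite // ltW.
by apply: (ratio_dist_le _ _ _ _ _ r) => //; apply: unit_coord_le1.
Qed.

Lemma Dist_ge0 u xi : 0 <= Dist u xi.
Proof. exact: bigmax_ge_id. Qed.

Lemma Dist_perturb u w xi d : 0 <= d -> (forall j, `|beta u j - beta w j| <= d) ->
  Dist u xi <= Dist w xi + `|(xi ord0 ord0)%:~R| * d.
Proof.
move=> d0 uw; apply: bigmax_le => [|j _]; first by rewrite addr_ge0 ?Dist_ge0 ?mulr_ge0.
set q : R := (xi ord0 ord0)%:~R; set b : R := (xi ord0 (ycoord j))%:~R.
have -> : q * beta u j - b = (q * beta w j - b) + q * (beta u j - beta w j) by ring.
apply: le_trans (ler_normD _ _) _; apply: lerD; last by rewrite normrM ler_wpM2l.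
exact: (le_bigmax _ (fun j => `|q * beta w j - (xi ord0 (ycoord j))%:~R|)).
Qed.

Section IntegerRay.
Context {zeta : 'rV[int]_s.+1}.
Hypothesis zeta_gt0 : 0 < zeta ord0 ord0.
Let P : R := (zeta ord0 ord0)%:~R.

Let P_gt0 : 0 < P. Proof. by rewrite ltr0z. Qed.

Lemma Dist_toR_fraction xi : exists n : int, Dist (toR R zeta) xi = n%:~R / P.
Proof.
apply: (big_ind (fun x => exists n : int, x = n%:~R / P)).
- by exists 0; rewrite mul0r.
- move=> x y [n ->] [m ->].
  by case: (leP (n%:~R / P) (m%:~R / P)) => _; [exists m | exists n].
(* |q' (b_j / q) - b'_j| = |q' b_j - q b'_j| / q *)
move=> j _; exists `|xi ord0 ord0 * zeta ord0 (ycoord j) - zeta ord0 ord0 * xi ord0 (ycoord j)|.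
rewrite /beta /toR !mxE intr_norm -[X in _ = _ * X](@ger0_norm _ P^-1); last first.
  by rewrite invr_ge0 ltW ?P_gt0.
rewrite -normrM; congr `|_|; rewrite rmorphB !rmorphM /=; field.
by rewrite gt_eqF ?P_gt0.
Qed.

Lemma Dist_toR_gap xi eta : Dist (toR R zeta) xi < Dist (toR R zeta) eta ->
  Dist (toR R zeta) xi + P^-1 <= Dist (toR R zeta) eta.
Proof.
have [n ->] := Dist_toR_fraction xi; have [m ->] := Dist_toR_fraction eta.
have Pi_gt0 : 0 < P^-1 by rewrite invr_gt0 P_gt0.
rewrite ltr_pM2r // ltr_int -lezD1 -(ler_int R) rmorphD /= => nm.
by rewrite -[X in _ + X]mul1r -mulrDl ler_pM2r.
Qed.

Lemma Dist_toR_self : Dist (toR R zeta) zeta = 0.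
Proof.
apply/eqP; rewrite eq_le Dist_ge0 andbT; apply: bigmax_le => // j _.
by rewrite /beta /toR !mxE mulrCA divff ?gt_eqF ?P_gt0 // mulr1 subrr normr0.
Qed.

Lemma best_approx_toR_le {xi} :
  best_approx (toR R zeta) xi -> xi ord0 ord0 <= zeta ord0 ord0.
Proof.
move=> [_ xi_best]; rewrite leNgt; apply/negP => lt_xi.
have : Dist (toR R zeta) xi < Dist (toR R zeta) zeta.
  apply: xi_best; [by rewrite -gtz0_ge1 | exact: ltW |].
  by move=> zeta_xi; rewrite zeta_xi ltxx in lt_xi.
by rewrite Dist_toR_self ltNge Dist_ge0.
Qed.

Context {v : 'rV[R]_s.+1}.
Hypothesis v_close : forall j, `|beta v j - beta (toR R zeta) j| <= (4 * P ^+ 2)^-1.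

Lemma Dist_lt_perturb xi eta :
  0 <= xi ord0 ord0 <= zeta ord0 ord0 -> 0 <= eta ord0 ord0 <= zeta ord0 ord0 ->
  Dist (toR R zeta) xi < Dist (toR R zeta) eta -> Dist v xi < Dist v eta.
Proof.
have P0 := P_gt0; set d := (4 * P ^+ 2)^-1.
have d0 : 0 <= d by rewrite invr_ge0 ltW ?mulr_gt0 ?exprn_gt0.
have shift (x : 'rV[int]_s.+1) :
    0 <= x ord0 ord0 <= zeta ord0 ord0 -> `|(x ord0 ord0)%:~R| * d <= (4 * P)^-1.
  case/andP=> x0 xz; rewrite ger0_norm ?ler0z //.
  have -> : (4 * P)^-1 = P * d by rewrite /d; field; rewrite gt_eqF.
  by rewrite ler_wpM2r // ler_int.
move=> /shift xi_err /shift eta_err /Dist_toR_gap gap.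
have zeta_close j : `|beta (toR R zeta) j - beta v j| <= d by rewrite distrC.
have := Dist_perturb _ _ xi _ d0 v_close.
have := Dist_perturb _ _ eta _ d0 zeta_close.
have : (4 * P)^-1 = P^-1 / 4 by rewrite invfM mulrC.
have : 0 < P^-1 by rewrite invr_gt0.
lra.
Qed.

Lemma best_approx_perturb xi : best_approx (toR R zeta) xi -> best_approx v xi.
Proof.
move=> xi_best; have xi_le := best_approx_toR_le xi_best.
case: xi_best => xi_ge1 xi_best; split => // eta eta_ge1 eta_le eta_neq.
apply: Dist_lt_perturb; last exact: xi_best.
- by rewrite (le_trans ler01) // xi_le.
- by rewrite (le_trans ler01) // (le_trans eta_le).
Qed.

Lemma Dist_toR_le_of_best_approx xi eta : best_approx v xi ->
  xi ord0 ord0 <= zeta ord0 ord0 -> 1 <= eta ord0 ord0 <= xi ord0 ord0 -> eta != xi ->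
  Dist (toR R zeta) xi <= Dist (toR R zeta) eta.
Proof.
move=> [xi_ge1 xi_best] xi_le /andP[eta_ge1 eta_le] eta_neq.
rewrite leNgt; apply/negP => /Dist_lt_perturb.
rewrite !(le_trans ler01) // xi_le (le_trans eta_le) // => /(_ isT isT).
by rewrite ltNge ltW // xi_best //; apply/eqP.
Qed.

End IntegerRay.

End Rays.

Theorem lemma2p1 (R : realType) (s : nat) (pi : {vspace 'rV[R]_s.+1})
  (zeta zeta_tau : 'rV[int]_s.+1) :
  absolutely_rational pi ->
  (2 <= \dim pi)%N ->
  in_sub pi zeta ->
  0 < zeta ord0 ord0 ->
  (* zeta = zeta^t is a best approximation (the last one) to l(zeta) *)
  best_approx (toR R zeta) zeta ->
  (* zeta^tau is a best approximation to l(zeta) *)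
  best_approx (toR R zeta) zeta_tau ->
  (* B_tau^t(l(zeta)) is contained in Lambda = Z^{s+1} ∩ pi *)
  (forall xi, best_approx (toR R zeta) xi ->
     zeta_tau ord0 ord0 <= xi ord0 ord0 <= zeta ord0 ord0 -> in_sub pi xi) ->
  (* D(zeta^tau) < D(xi) for all integer points xi outside pi *)
  (forall xi : 'rV[int]_s.+1, ~ in_sub pi xi ->
     Dist (toR R zeta) zeta_tau < Dist (toR R zeta) xi) ->
  exists eps : R, 0 < eps /\
    forall v : 'rV[R]_s.+1, 0 < v ord0 ord0 -> angle v (toR R zeta) < eps ->
      (forall xi, best_approx (toR R zeta) xi -> best_approx v xi) /\
      (forall xi, best_approx v xi ->
         zeta_tau ord0 ord0 <= xi ord0 ord0 <= zeta ord0 ord0 -> in_sub pi xi).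
Proof.
move=> _ _ _ zeta_gt0 _ tau_best tau_to_zeta_in_pi tau_beats_outside.
have d_gt0 : 0 < (4 * (zeta ord0 ord0)%:~R ^+ 2)^-1 :> R.
  by rewrite invr_gt0 mulr_gt0 ?exprn_gt0 ?ltr0z.
have toR_zeta_gt0 : 0 < toR R zeta ord0 ord0 by rewrite mxE ltr0z.
have [eps eps_gt0 close] := beta_close_of_angle toR_zeta_gt0 d_gt0.
exists eps; split => // v v_gt0 /(close v v_gt0) {}close.
have tau_le := best_approx_toR_le zeta_gt0 tau_best.
split => [xi|xi xi_best /andP[tau_le_xi xi_le]].
  exact: best_approx_perturb.
have [-> | xi_neq] := eqVneq xi zeta_tau; first by apply: tau_to_zeta_in_pi; rewrite ?lexx.
have [tau_ge1 _] := tau_best.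
apply: contraT => /negP/tau_beats_outside.
by rewrite ltNge (Dist_toR_le_of_best_approx zeta_gt0 close) ?tau_ge1 // eq_sym.
Qed.
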